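(* Consider the downtown bathtub model with and without perimeter control described in the context, with a fixed number $N_s>0$ of suburban commuters. Then: (i) the short-run equilibrium bathtub cost under perimeter control, $C_s^{bp*}$, is uniquely determined, namely (in the controlled regime $\theta^p>2$) $$C_s^{bp*}=\frac{\beta\gamma}{\beta+\gamma}\,\frac{N_s}{n_jv_f/(4L)}+\frac{4\alpha L}{v_f}(1-\ln 2);$$ (ii) the introduction of autonomous vehicles decreases $C_s^{bp*}$: $C_s^{bp*}$ is strictly decreasing in $n_j$ and strictly increasing in $\alpha$, so replacing $(\alpha,n_j)$ by $(\eta\alpha,\xi n_j)$ with $\frac{\beta}{\alpha}<\eta\le1$, $\xi\ge1$, $(\eta,\xi)\neq(1,1)$ strictly decreases it; (iii) hypercongestion mitigation by perimeter control decreases the short-run equilibrium bathtub cost: if the equilibrium without control has $\theta=\frac{C_s^{b*}v_f}{\alpha L}>2$ (hypercongestion), then $C_s^{b*}>C_s^{bp*}$.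
   Context: Downtown traffic: accumulation $n(t)\ge0$, $\dot n=I-G$, outflow $G=nv/L$, $L>0$ trip length, $v=v_f(1-n/n_j)$, $v_f,n_j>0$; travel time $T(t)=L/v(t)$; schedule cost $s(t)=\beta(t^*-t)$ for $t\le t^*$, $\gamma(t-t^* )$ for $t>t^*$; $\alpha,\beta,\gamma>0$. Without control: bathtub cost $C_s^b(t)=\alpha T(t)+s(t)$; a short-run equilibrium is $(n(\cdot),C_s^{b*})$ with $C_s^b(t)=C_s^{b*}$ when $n(t)>0$, $\ge C_s^{b*}$ when $n(t)=0$, and $\int n v/L\,dt=N_s$; it satisfies $N_s=\alpha n_j(\frac1\beta+\frac1\gamma)(\ln\theta+\frac1\theta-1)$ with $\theta=C_s^{b*}v_f/(\alpha L)$. Perimeter control: inflow $I(t)=I_p:=n_jv_f/(4L)$ when $n(t)=n_j/2$, and equal to the boundary arrival rate when $n(t)<n_j/2$; excess vehicles wait in a FIFO point queue, with waiting time $T_w(t)=q(t)/I_p$ for queue length $q(t)$ met by the commuter arriving at $t$; during the control period $[t_s^p,t_e^p]$ downtown travel time is $T^p(t)=2L/v_f+T_w(t)$, otherwise $T^p(t)=T(t)$; bathtub cost $C_s^{bp}(t)=\alpha T^p(t)+s(t)$; equilibrium $(n,q,C_s^{bp*})$ with $C_s^{bp}(t)=C_s^{bp*}$ when $n(t)>0$, $\ge$ when $n(t)=0$, $n(t)=n_j/2$ when $q(t)>0$, $n(t)\le n_j/2$ when $q(t)=0$, and $\int nv/L\,dt=N_s$; $\theta^p=C_s^{bp*}v_f/(\alpha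 L)$. Autonomous vehicles: $\alpha\mapsto\eta\alpha$, $n_j\mapsto\xi n_j$. *)

From Stdlib Require Import Reals Lra.
From Coquelicot Require Import Coquelicot.
Open Scope R_scope.

Definition speed (vf nj n : R) : R := vf * (1 - n / nj).

Definition outflow (L vf nj n : R) : R := n * speed vf nj n / L.

Definition sched (beta gamma tstar t : R) : R :=
  if Rle_dec t tstar then beta * (tstar - t) else gamma * (t - tstar).

Definition Ip (L vf nj : R) : R := nj * vf / (4 * L).

(* theta = C v_f / (alpha L)  (also used for theta^p) *)
Definition theta (alpha L vf C : R) : R := C * vf / (alpha * L).

Definition bathtub_eq (alpha beta gamma tstar L vf nj Ns : R)
    (n : R -> R) (C : R) : Prop :=
  (forall t, 0 <= n t < nj) /\
  (forall t, 0 < n t ->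
     alpha * (L / speed vf nj (n t)) + sched beta gamma tstar t = C) /\
  (forall t, n t = 0 ->
     alpha * (L / speed vf nj (n t)) + sched beta gamma tstar t >= C) /\
  is_RInt_gen (fun t => outflow L vf nj (n t))
    (Rbar_locally m_infty) (Rbar_locally p_infty) Ns.

Definition Tp (L vf nj : R) (n q : R -> R) (ts te t : R) : R :=
  if Rle_dec ts t then
    if Rle_dec t te then 2 * L / vf + q t / Ip L vf nj
    else L / speed vf nj (n t)
  else L / speed vf nj (n t).

Definition ctrl_eq (alpha beta gamma tstar L vf nj Ns : R)
    (n q : R -> R) (ts te C : R) : Prop :=
  (forall t, 0 <= n t) /\
  (forall t, 0 <= q t) /\
  (forall t, 0 < q t -> n t = nj / 2) /\
  (forall t, q t = 0 -> n t <= nj / 2) /\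
  (forall t, ts <= t <= te -> n t = nj / 2) /\
  (forall t, 0 < n t ->
     alpha * Tp L vf nj n q ts te t + sched beta gamma tstar t = C) /\
  (forall t, n t = 0 ->
     alpha * Tp L vf nj n q ts te t + sched beta gamma tstar t >= C) /\
  is_RInt_gen (fun t => outflow L vf nj (n t))
    (Rbar_locally m_infty) (Rbar_locally p_infty) Ns.

Definition Cbp_formula (alpha beta gamma L vf nj Ns : R) : R :=
  beta * gamma / (beta + gamma) * (Ns / Ip L vf nj)
  + 4 * alpha * L / vf * (1 - ln 2).

From Stdlib Require Import Reals Lra.
From Coquelicot Require Import Coquelicot.
Open Scope R_scope.

(* In equilibrium the downtown outflow at time t depends only on the travel
   cost x = C - s(t) paid at t.  With a = alpha L / v_f the free-flow cost,
   it is alpha n_j (1/x - a/x^2) for x > a, and 0 for x <= a; under perimeter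
   control the accumulation is capped at n_j/2, which caps the cost seen by
   the outflow at 2a.  As s is piecewise linear with slopes -beta and gamma,
   the substitution x = C - s(t) gives N_s = (1/beta + 1/gamma) times the
   integral of this profile over [a, C].  Without control this is the
   relation N_s = alpha n_j (1/beta + 1/gamma)(ln theta + 1/theta - 1); with
   control it is affine in C, which gives (i) and then (ii).  Eliminating N_s
   between the two yields C_s^{bp*} = 4a (ln (theta/2) + 1/theta), which is
   below C_s^{b*} = a theta because ln y < (y - 1/y)/2 for y > 1. *)

Lemma is_RInt_gen_R_unique (Fa Fb : (R -> Prop) -> Prop)
  {FFa : ProperFilter' Fa} {FFb : ProperFilter' Fb} (f : R -> R) (l1 l2 : R) :
  is_RInt_gen f Fa Fb l1 -> is_RInt_gen f Fa Fb l2 -> l1 = l2.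
Proof.
  intros H1 H2.
  rewrite <- (is_RInt_gen_unique (V := R_CompleteNormedModule) f l1 H1).
  exact (is_RInt_gen_unique (V := R_CompleteNormedModule) f l2 H2).
Qed.

Lemma is_RInt_gen_eventually_zero (f : R -> R) (Fa Fb : (R -> Prop) -> Prop) :
  Filter Fa -> Filter Fb ->
  filter_prod Fa Fb (fun ab =>
    forall x, Rmin (fst ab) (snd ab) < x < Rmax (fst ab) (snd ab) -> f x = 0) ->
  is_RInt_gen f Fa Fb 0.
Proof.
  intros FFa FFb f_zero P HP; unfold filtermapi.
  eapply filter_imp; [| exact f_zero]. intros [a b] f_zero_ab.
  exists 0. split; [| exact (locally_singleton _ _ HP)].
  apply (is_RInt_ext (fun _ => 0)).
  { intros x Hx. symmetry. exact (f_zero_ab x Hx). }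
  pose proof (@is_RInt_const R_NormedModule a b 0) as H0.
  unfold scal in H0; simpl in H0; unfold mult in H0; simpl in H0.
  rewrite Rmult_0_r in H0. exact H0.
Qed.

Lemma is_RInt_gen_supported (f : R -> R) (a b I : R) :
  a <= b -> (forall x, x < a -> f x = 0) -> (forall x, b < x -> f x = 0) ->
  is_RInt f a b I ->
  is_RInt_gen f (Rbar_locally m_infty) (Rbar_locally p_infty) I.
Proof.
  intros hab f_left f_right HI.
  assert (left_tail : is_RInt_gen f (Rbar_locally m_infty) (at_point a) 0).
  { apply is_RInt_gen_eventually_zero; try typeclasses eauto.
    apply (Filter_prod _ _ _ (fun x => x < a) (fun y => y = a)).
    - exists a. auto.
    - reflexivity.
    - intros x y hx -> z hz. simpl in hz.
      rewrite Rmin_left, Rmax_right in hz by lra. apply f_left. lra. }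
  assert (right_tail : is_RInt_gen f (at_point b) (Rbar_locally p_infty) 0).
  { apply is_RInt_gen_eventually_zero; try typeclasses eauto.
    apply (Filter_prod _ _ _ (fun x => x = b) (fun y => b < y)).
    - reflexivity.
    - exists b. auto.
    - intros x y -> hy z hz. simpl in hz.
      rewrite Rmin_left, Rmax_right in hz by lra. apply f_right. lra. }
  apply is_RInt_gen_at_point in HI.
  pose proof (is_RInt_gen_Chasles _ _ _ _ left_tail
                (is_RInt_gen_Chasles _ _ _ _ HI right_tail)) as H.
  replace I with (plus 0 (plus I 0)) by (unfold plus; simpl; ring).
  exact H.
Qed.

Section ScheduleSubstitution.

Variables (beta gamma tstar : R) (h : R -> R) (a C I : R).
Hypotheses (hbeta : 0 < beta) (hgamma : 0 < gamma) (haC : a <= C).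
Hypothesis HI : is_RInt h a C I.

Lemma is_RInt_sched_early :
  is_RInt (fun t => h (C - sched beta gamma tstar t))
    (tstar - (C - a) / beta) tstar (I / beta).
Proof.
  set (t1 := tstar - (C - a) / beta).
  assert (t1_le : t1 <= tstar).
  { assert (0 <= (C - a) / beta) by (apply Rdiv_le_0_compat; lra). unfold t1; lra. }
  assert (H : is_RInt h (beta * t1 + (C - beta * tstar)) (beta * tstar + (C - beta * tstar)) I).
  { replace (beta * t1 + _) with a by (unfold t1; field; lra).
    replace (beta * tstar + _) with C by ring. exact HI. }
  apply is_RInt_comp_lin, (is_RInt_scal _ _ _ (/ beta)) in H.
  replace (I / beta) with (scal (/ beta) I)
    by (unfold scal; simpl; unfold mult; simpl; field; lra).
  eapply is_RInt_ext; [| exact H].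
  intros t Ht. rewrite Rmin_left, Rmax_right in Ht by lra.
  unfold sched. destruct (Rle_dec t tstar); [| lra].
  unfold scal; simpl; unfold mult; simpl.
  replace (C - beta * (tstar - t)) with (beta * t + (C - beta * tstar)) by ring.
  field; lra.
Qed.

Lemma is_RInt_sched_late :
  is_RInt (fun t => h (C - sched beta gamma tstar t))
    tstar (tstar + (C - a) / gamma) (I / gamma).
Proof.
  set (t4 := tstar + (C - a) / gamma).
  assert (le_t4 : tstar <= t4).
  { assert (0 <= (C - a) / gamma) by (apply Rdiv_le_0_compat; lra). unfold t4; lra. }
  assert (H : is_RInt h (- gamma * tstar + (C + gamma * tstar))
                        (- gamma * t4 + (C + gamma * tstar)) (opp I)).
  { replace (- gamma * tstar + _) with C by ring.
    replace (- gamma * t4 + _) with a by (unfold t4; field; lra).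
    exact (is_RInt_swap _ _ _ _ HI). }
  apply is_RInt_comp_lin, (is_RInt_scal _ _ _ (- / gamma)) in H.
  replace (I / gamma) with (scal (- / gamma) (opp I))
    by (unfold scal, opp; simpl; unfold mult, opp; simpl; field; lra).
  eapply is_RInt_ext; [| exact H].
  intros t Ht. rewrite Rmin_left, Rmax_right in Ht by lra.
  unfold sched. destruct (Rle_dec t tstar); [lra |].
  unfold scal; simpl; unfold mult; simpl.
  replace (C - gamma * (t - tstar)) with (- gamma * t + (C + gamma * tstar)) by ring.
  field; lra.
Qed.

Lemma is_RInt_gen_sched_comp :
  (forall x, x < a -> h x = 0) ->
  is_RInt_gen (fun t => h (C - sched beta gamma tstar t))
    (Rbar_locally m_infty) (Rbar_locally p_infty) (I / beta + I / gamma).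
Proof.
  intros h_zero.
  assert (beta_mul : beta * ((C - a) / beta) = C - a) by (field; lra).
  assert (gamma_mul : gamma * ((C - a) / gamma) = C - a) by (field; lra).
  assert (0 <= (C - a) / beta) by (apply Rdiv_le_0_compat; lra).
  assert (0 <= (C - a) / gamma) by (apply Rdiv_le_0_compat; lra).
  apply (is_RInt_gen_supported _ (tstar - (C - a) / beta) (tstar + (C - a) / gamma)).
  - lra.
  - intros t ht. apply h_zero.
    unfold sched. destruct (Rle_dec t tstar); [nra | lra].
  - intros t ht. apply h_zero.
    unfold sched. destruct (Rle_dec t tstar); [lra | nra].
  - exact (is_RInt_Chasles _ _ _ _ _ _ is_RInt_sched_early is_RInt_sched_late).
Qed.

Lemma is_RInt_gen_sched_comp_eq (f : R -> R) (N : R) :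
  (forall t, f t = h (C - sched beta gamma tstar t)) -> (forall x, x < a -> h x = 0) ->
  is_RInt_gen f (Rbar_locally m_infty) (Rbar_locally p_infty) N ->
  N = I / beta + I / gamma.
Proof.
  intros f_eq h_zero HN.
  apply (is_RInt_gen_R_unique (Rbar_locally m_infty) (Rbar_locally p_infty) f); [exact HN |].
  eapply is_RInt_gen_ext; [| exact (is_RInt_gen_sched_comp h_zero)].
  apply filter_forall. intros ab t _. symmetry. apply f_eq.
Qed.

End ScheduleSubstitution.

Definition cost_flow (k a x : R) : R := k * (1 / x - a / (x * x)).

Definition cost_flow_prim (k a x : R) : R := k * (ln x + a / x).

Definition bathtub_profile (k a x : R) : R :=
  if Rle_dec x a then 0 else cost_flow k a x.

Definition ctrl_profile (k a x : R) : R := bathtub_profile k a (Rmin x (2 * a)).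

Lemma is_RInt_cost_flow (k a x y : R) : 0 < x -> 0 < y ->
  is_RInt (cost_flow k a) x y (cost_flow_prim k a y - cost_flow_prim k a x).
Proof.
  intros hx hy.
  apply (is_RInt_derive (cost_flow_prim k a) (cost_flow k a)); intros z hz;
    assert (0 < z) by (pose proof (Rmin_glb_lt x y 0 hx hy); lra).
  - unfold cost_flow_prim, cost_flow. auto_derive; [lra | field; lra].
  - apply (ex_derive_continuous (V := R_CompleteNormedModule)).
    unfold cost_flow. auto_derive. assert (0 < z * z) by nra. repeat split; lra.
Qed.

Lemma is_RInt_bathtub_profile (k a C : R) : 0 < a <= C ->
  is_RInt (bathtub_profile k a) a C (cost_flow_prim k a C - cost_flow_prim k a a).
Proof.
  intros [ha haC].
  eapply is_RInt_ext; [| apply is_RInt_cost_flow; lra].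
  intros x hx. rewrite Rmin_left, Rmax_right in hx by lra.
  unfold bathtub_profile. destruct (Rle_dec x a); [lra | reflexivity].
Qed.

Lemma is_RInt_ctrl_profile (k a C : R) : 0 < a -> 2 * a <= C ->
  is_RInt (ctrl_profile k a) a C
    (cost_flow_prim k a (2 * a) - cost_flow_prim k a a
     + (C - 2 * a) * cost_flow k a (2 * a)).
Proof.
  intros ha hC.
  assert (uncapped : is_RInt (ctrl_profile k a) a (2 * a)
                       (cost_flow_prim k a (2 * a) - cost_flow_prim k a a)).
  { eapply is_RInt_ext; [| apply is_RInt_cost_flow; lra].
    intros x hx. rewrite Rmin_left, Rmax_right in hx by lra.
    unfold ctrl_profile, bathtub_profile. rewrite Rmin_left by lra.
    destruct (Rle_dec x a); [lra | reflexivity]. }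
  assert (capped : is_RInt (ctrl_profile k a) (2 * a) C
                     (scal (C - 2 * a) (cost_flow k a (2 * a)))).
  { eapply is_RInt_ext; [| apply (@is_RInt_const R_NormedModule)].
    intros x hx. rewrite Rmin_left, Rmax_right in hx by lra.
    unfold ctrl_profile, bathtub_profile. rewrite Rmin_right by lra.
    destruct (Rle_dec (2 * a) a); [lra | reflexivity]. }
  exact (is_RInt_Chasles _ _ _ _ _ _ uncapped capped).
Qed.

Section Outflow.

Variables (L vf nj alpha : R).
Hypotheses (hL : 0 < L) (hvf : 0 < vf) (hnj : 0 < nj) (halpha : 0 < alpha).

Lemma free_flow_cost_pos : 0 < alpha * L / vf.
Proof. apply Rdiv_lt_0_compat; [apply Rmult_lt_0_compat |]; lra. Qed.

Lemma travel_cost_speed (m : R) : m < nj ->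
  alpha * (L / speed vf nj m) = alpha * L / vf / (1 - m / nj).
Proof.
  intros hm. assert (m / nj < 1) by (apply Rlt_div_l; lra).
  unfold speed. field. repeat split; lra.
Qed.

Lemma travel_cost_empty : alpha * (L / speed vf nj 0) = alpha * L / vf.
Proof. unfold speed. field. repeat split; lra. Qed.

Lemma free_flow_cost_lt_travel_cost (m : R) : 0 < m < nj ->
  alpha * L / vf < alpha * (L / speed vf nj m).
Proof.
  intros [hm0 hm]. rewrite travel_cost_speed by lra.
  assert (0 < m / nj) by (apply Rdiv_lt_0_compat; lra).
  assert (m / nj < 1) by (apply Rlt_div_l; lra).
  pose proof free_flow_cost_pos.
  set (a := alpha * L / vf) in *. apply (Rlt_div_r a a (1 - m / nj)); nra.
Qed.

Lemma travel_cost_le_twice_free_flow (m : R) : m <= nj / 2 ->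
  alpha * (L / speed vf nj m) <= 2 * (alpha * L / vf).
Proof.
  intros hm. rewrite travel_cost_speed by lra.
  assert (m / nj <= 1 / 2) by (apply Rle_div_l; lra).
  pose proof free_flow_cost_pos.
  set (a := alpha * L / vf) in *. apply (Rle_div_l a (2 * a) (1 - m / nj)); nra.
Qed.

Lemma outflow_cost_flow (m : R) : m < nj ->
  outflow L vf nj m = cost_flow (nj * alpha) (alpha * L / vf) (alpha * (L / speed vf nj m)).
Proof.
  intros hm. rewrite travel_cost_speed by lra.
  assert (m / nj < 1) by (apply Rlt_div_l; lra).
  unfold outflow, speed, cost_flow. field. repeat split; lra.
Qed.

Lemma outflow_empty : outflow L vf nj 0 = 0.
Proof. unfold outflow, Rdiv. ring. Qed.

Lemma outflow_half_jam :
  outflow L vf nj (nj / 2) = cost_flow (nj * alpha) (alpha * L / vf) (2 * (alpha * L / vf)).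
Proof. unfold outflow, speed, cost_flow. field. repeat split; lra. Qed.

Lemma outflow_bathtub_profile (m x : R) : 0 <= m < nj ->
  (0 < m -> x = alpha * (L / speed vf nj m)) -> (m = 0 -> x <= alpha * L / vf) ->
  outflow L vf nj m = bathtub_profile (nj * alpha) (alpha * L / vf) x.
Proof.
  intros [[hm0 | hm0] hm] hpos hzero; unfold bathtub_profile.
  - rewrite (hpos hm0).
    pose proof (free_flow_cost_lt_travel_cost m (conj hm0 hm)).
    destruct (Rle_dec _ _); [lra |]. apply outflow_cost_flow, hm.
  - subst m. destruct (Rle_dec x _) as [_ | hx]; [apply outflow_empty |].
    exfalso. apply hx, hzero, eq_refl.
Qed.

End Outflow.

Lemma lt_theta (alpha L vf C r : R) : 0 < alpha -> 0 < L -> 0 < vf ->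
  r < theta alpha L vf C <-> r * (alpha * L / vf) < C.
Proof.
  intros. unfold theta.
  replace (C * vf / (alpha * L)) with (C / (alpha * L / vf)) by (field; lra).
  symmetry. apply Rlt_div_r, free_flow_cost_pos; assumption.
Qed.

Lemma Tp_cases (L vf nj : R) (n q : R -> R) (ts te t : R) :
  (ts <= t <= te /\ Tp L vf nj n q ts te t = 2 * L / vf + q t / Ip L vf nj) \/
  (~ (ts <= t <= te) /\ Tp L vf nj n q ts te t = L / speed vf nj (n t)).
Proof.
  unfold Tp. destruct (Rle_dec ts t), (Rle_dec t te); [left | right ..]; split; auto; lra.
Qed.

Lemma ln_lt_half_sub_inv (y : R) : 1 < y -> ln y < (y - 1 / y) / 2.
Proof.
  intros hy.
  destruct (MVT_cor2 (fun y => (y - 1 / y) / 2 - ln y) (fun y => (1 + 1 / (y * y)) / 2 - 1 / y)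
              1 y hy) as [c [Hc [hc1 hcy]]].
  { intros c hc. apply is_derive_Reals. auto_derive; [lra | field; lra]. }
  assert (0 < (1 + 1 / (c * c)) / 2 - 1 / c).
  { replace ((1 + 1 / (c * c)) / 2 - 1 / c) with ((c - 1) * (c - 1) / (2 * (c * c)))
      by (field; lra).
    apply Rdiv_lt_0_compat; nra. }
  rewrite ln_1 in Hc. replace ((1 - 1 / 1) / 2 - 0) with 0 in Hc by field. nra.
Qed.

Lemma ln2_lt_1 : ln 2 < 1.
Proof.
  rewrite <- ln_exp. apply ln_increasing; [lra |].
  pose proof (exp_ineq1 1 ltac:(lra)). lra.
Qed.

Section Equilibrium.

Variables (L vf nj alpha beta gamma tstar Ns : R).
Hypotheses (hL : 0 < L) (hvf : 0 < vf) (hnj : 0 < nj) (halpha : 0 < alpha)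
  (hbeta : 0 < beta) (hgamma : 0 < gamma).

Lemma bathtub_eq_outflow (n : R -> R) (C t : R) :
  bathtub_eq alpha beta gamma tstar L vf nj Ns n C ->
  outflow L vf nj (n t)
  = bathtub_profile (nj * alpha) (alpha * L / vf) (C - sched beta gamma tstar t).
Proof.
  intros [hn [hpos [hzero _]]].
  apply outflow_bathtub_profile; auto.
  - intros ht. rewrite <- (hpos t ht). ring.
  - intros ht. specialize (hzero t ht). rewrite ht, travel_cost_empty in hzero by lra. lra.
Qed.

Lemma ctrl_eq_outflow (n q : R -> R) (ts te C t : R) :
  ctrl_eq alpha beta gamma tstar L vf nj Ns n q ts te C ->
  outflow L vf nj (n t)
  = ctrl_profile (nj * alpha) (alpha * L / vf) (C - sched beta gamma tstar t).
Proof.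
  intros [hn [hq [hqpos [hq0 [hperiod [hpos [hzero _]]]]]]].
  assert (half : n t <= nj / 2).
  { destruct (hq t) as [h | h]; [rewrite (hqpos t h); lra | apply hq0; auto]. }
  pose proof (free_flow_cost_pos L vf alpha hL hvf halpha).
  unfold ctrl_profile.
  destruct (Tp_cases L vf nj n q ts te t) as [[hin hTp] | [hout hTp]].
  - assert (hx : 2 * (alpha * L / vf) <= C - sched beta gamma tstar t).
    { assert (0 <= q t / Ip L vf nj).
      { apply Rdiv_le_0_compat; [apply hq |].
        unfold Ip. apply Rdiv_lt_0_compat; [apply Rmult_lt_0_compat |]; lra. }
      rewrite <- (hpos t ltac:(rewrite (hperiod t hin); lra)), hTp.
      replace (alpha * (2 * L / vf + q t / Ip L vf nj))
        with (2 * (alpha * L / vf) + alpha * (q t / Ip L vf nj)) by (unfold Rdiv; ring).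
      nra. }
    rewrite Rmin_right, (hperiod t hin), (outflow_half_jam _ _ _ alpha) by lra.
    unfold bathtub_profile. destruct (Rle_dec _ _); [lra | reflexivity].
  - assert (hx : C - sched beta gamma tstar t <= 2 * (alpha * L / vf)).
    { destruct (hn t) as [ht | ht].
      - rewrite <- (hpos t ht), hTp.
        pose proof (travel_cost_le_twice_free_flow L vf nj alpha hL hvf hnj halpha (n t) half).
        lra.
      - specialize (hzero t (eq_sym ht)). rewrite hTp, <- ht, travel_cost_empty in hzero by lra.
        lra. }
    rewrite Rmin_left by lra.
    apply outflow_bathtub_profile; auto; [split; [apply hn | lra] | |].
    + intros ht. rewrite <- (hpos t ht), hTp. ring.
    + intros ht. specialize (hzero t ht). rewrite hTp, ht, travel_cost_empty in hzero by lra.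
      lra.
Qed.

Lemma bathtub_eq_Ns (n : R -> R) (C : R) :
  bathtub_eq alpha beta gamma tstar L vf nj Ns n C -> alpha * L / vf <= C ->
  Ns = alpha * nj * (1 / beta + 1 / gamma)
       * (ln (theta alpha L vf C) + 1 / theta alpha L vf C - 1).
Proof.
  intros HE hC.
  pose proof (free_flow_cost_pos L vf alpha hL hvf halpha) as ha.
  rewrite (is_RInt_gen_sched_comp_eq beta gamma tstar (bathtub_profile (nj * alpha) (alpha * L / vf))
             _ C _ hbeta hgamma hC (is_RInt_bathtub_profile _ _ _ (conj ha hC))
             (fun t => outflow L vf nj (n t)) Ns).
  - replace (theta alpha L vf C) with (C / (alpha * L / vf)) by (unfold theta; field; lra).
    rewrite ln_div by lra. unfold cost_flow_prim. field. repeat split; lra.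
  - intros t. exact (bathtub_eq_outflow n C t HE).
  - intros x hx. unfold bathtub_profile. destruct (Rle_dec x _); [reflexivity | lra].
  - apply HE.
Qed.

Lemma ctrl_eq_Ns (n q : R -> R) (ts te C : R) :
  ctrl_eq alpha beta gamma tstar L vf nj Ns n q ts te C -> 2 * (alpha * L / vf) <= C ->
  Ns = (1 / beta + 1 / gamma) * Ip L vf nj * (C - 4 * (alpha * L / vf) * (1 - ln 2)).
Proof.
  intros HE hC.
  pose proof (free_flow_cost_pos L vf alpha hL hvf halpha) as ha.
  rewrite (is_RInt_gen_sched_comp_eq beta gamma tstar (ctrl_profile (nj * alpha) (alpha * L / vf))
             (alpha * L / vf) C _ hbeta hgamma ltac:(lra) (is_RInt_ctrl_profile _ _ _ ha hC)
             (fun t => outflow L vf nj (n t)) Ns).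
  - unfold cost_flow_prim, cost_flow, Ip. rewrite ln_mult by lra. field. repeat split; lra.
  - intros t. exact (ctrl_eq_outflow n q ts te C t HE).
  - intros x hx. unfold ctrl_profile, bathtub_profile.
    destruct (Rle_dec (Rmin x _) _) as [_ | hmin]; [reflexivity |].
    exfalso. apply hmin. pose proof (Rmin_l x (2 * (alpha * L / vf))). lra.
  - apply HE.
Qed.

Lemma ctrl_eq_cost (n q : R -> R) (ts te C : R) :
  ctrl_eq alpha beta gamma tstar L vf nj Ns n q ts te C -> 2 < theta alpha L vf C ->
  C = Cbp_formula alpha beta gamma L vf nj Ns.
Proof.
  intros HE htheta. apply lt_theta in htheta; [| lra ..].
  unfold Cbp_formula. rewrite (ctrl_eq_Ns n q ts te C HE ltac:(lra)).
  unfold Ip. field. repeat split; lra.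
Qed.

Lemma Cbp_formula_lt_bathtub_cost (n : R -> R) (Cb : R) :
  bathtub_eq alpha beta gamma tstar L vf nj Ns n Cb -> 2 < theta alpha L vf Cb ->
  Cbp_formula alpha beta gamma L vf nj Ns < Cb.
Proof.
  intros HE htheta.
  pose proof (free_flow_cost_pos L vf alpha hL hvf halpha) as ha.
  assert (hCb : 2 * (alpha * L / vf) < Cb) by (apply lt_theta; lra).
  unfold Cbp_formula. rewrite (bathtub_eq_Ns n Cb HE ltac:(lra)).
  set (θ := theta alpha L vf Cb) in *.
  assert (Cb_eq : Cb = alpha * L / vf * θ) by (unfold θ, theta; field; lra).
  pose proof (ln_lt_half_sub_inv (θ / 2) ltac:(lra)) as key.
  rewrite ln_div in key by lra. replace (1 / (θ / 2)) with (2 / θ) in key by (field; lra).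
  replace (beta * gamma / (beta + gamma) * _ + _)
    with (4 * (alpha * L / vf) * (ln θ - ln 2 + 1 / θ))
    by (unfold Ip; field; repeat split; lra).
  nra.
Qed.

Lemma ctrl_eq_cost_lt_bathtub_eq_cost (n n' q' : R -> R) (Cb ts te Cbp : R) :
  bathtub_eq alpha beta gamma tstar L vf nj Ns n Cb -> 2 < theta alpha L vf Cb ->
  ctrl_eq alpha beta gamma tstar L vf nj Ns n' q' ts te Cbp -> Cbp < Cb.
Proof.
  intros HB htheta HC.
  destruct (Rle_lt_dec (theta alpha L vf Cbp) 2) as [uncontrolled | controlled].
  - assert (~ 2 * (alpha * L / vf) < Cbp)
      by (intros h; apply (lt_theta alpha L vf) in h; lra).
    apply (lt_theta alpha L vf) in htheta; lra.
  - rewrite (ctrl_eq_cost n' q' ts te Cbp HC controlled).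
    exact (Cbp_formula_lt_bathtub_cost n Cb HB htheta).
Qed.

End Equilibrium.

Lemma Cbp_formula_lt (alpha1 alpha2 beta gamma L vf nj1 nj2 Ns : R) :
  0 < L -> 0 < vf -> 0 < beta -> 0 < gamma -> 0 < Ns ->
  0 < alpha1 <= alpha2 -> 0 < nj1 <= nj2 -> alpha1 < alpha2 \/ nj1 < nj2 ->
  Cbp_formula alpha1 beta gamma L vf nj2 Ns < Cbp_formula alpha2 beta gamma L vf nj1 Ns.
Proof.
  intros hL hvf hbeta hgamma hNs halpha hnj hlt.
  set (P := beta * gamma / (beta + gamma) * (4 * L * Ns / vf)).
  set (Q := 4 * L / vf * (1 - ln 2)).
  assert (decomp : forall alpha nj, 0 < nj ->
            Cbp_formula alpha beta gamma L vf nj Ns = P / nj + Q * alpha).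
  { intros alpha nj hnj0. unfold Cbp_formula, Ip, P, Q. field. repeat split; lra. }
  rewrite !decomp by lra.
  assert (0 < P).
  { unfold P. apply Rmult_lt_0_compat; apply Rdiv_lt_0_compat; nra. }
  assert (0 < Q).
  { unfold Q. pose proof ln2_lt_1. apply Rmult_lt_0_compat; [apply Rdiv_lt_0_compat |]; lra. }
  assert (P / nj2 <= P / nj1).
  { unfold Rdiv. apply Rmult_le_compat_l; [lra | apply Rinv_le_contravar; lra]. }
  destruct hlt as [ha | hn].
  - assert (Q * alpha1 < Q * alpha2) by (apply Rmult_lt_compat_l; lra). lra.
  - assert (P / nj2 < P / nj1).
    { unfold Rdiv. apply Rmult_lt_compat_l; [lra | apply Rinv_lt_contravar; nra]. }
    assert (Q * alpha1 <= Q * alpha2) by (apply Rmult_le_compat_l; lra). lra.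
Qed.

Lemma Cbp_formula_av_lt (alpha beta gamma L vf nj Ns eta xi : R) :
  0 < L -> 0 < vf -> 0 < nj -> 0 < alpha -> 0 < beta -> 0 < gamma -> 0 < Ns ->
  0 < eta <= 1 -> 1 <= xi -> (eta, xi) <> (1, 1) ->
  Cbp_formula (eta * alpha) beta gamma L vf (xi * nj) Ns
  < Cbp_formula alpha beta gamma L vf nj Ns.
Proof.
  intros hL hvf hnj halpha hbeta hgamma hNs [heta heta1] hxi hne.
  apply Cbp_formula_lt; try nra.
  destruct (Rle_lt_or_eq_dec _ _ heta1) as [heta_lt | ->]; [left; nra | right].
  destruct (Rle_lt_or_eq_dec _ _ hxi) as [hxi_gt | <-]; [nra | congruence].
Qed.

Theorem proposition3 (L vf nj alpha beta gamma tstar Ns : R)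
  (hL : 0 < L) (hvf : 0 < vf) (hnj : 0 < nj) (halpha : 0 < alpha)
  (hbeta : 0 < beta) (hgamma : 0 < gamma) (hNs : 0 < Ns) :
  (* (i) uniqueness and closed form of C_s^{bp*} in the controlled regime *)
  (forall (n q : R -> R) (ts te C : R),
     ctrl_eq alpha beta gamma tstar L vf nj Ns n q ts te C ->
     theta alpha L vf C > 2 ->
     C = Cbp_formula alpha beta gamma L vf nj Ns) /\
  (* (ii) monotonicity in n_j and alpha, and the effect of AVs *)
  ((forall nj1 nj2, 0 < nj1 < nj2 ->
      Cbp_formula alpha beta gamma L vf nj2 Ns
      < Cbp_formula alpha beta gamma L vf nj1 Ns) /\
   (forall a1 a2, 0 < a1 < a2 ->
      Cbp_formula a1 beta gamma L vf nj Ns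
      < Cbp_formula a2 beta gamma L vf nj Ns) /\
   (forall eta xi, beta / alpha < eta <= 1 -> 1 <= xi -> (eta, xi) <> (1, 1) ->
      Cbp_formula (eta * alpha) beta gamma L vf (xi * nj) Ns
      < Cbp_formula alpha beta gamma L vf nj Ns /\
      (forall (n q n' q' : R -> R) (ts te C ts' te' C' : R),
         ctrl_eq alpha beta gamma tstar L vf nj Ns n q ts te C ->
         theta alpha L vf C > 2 ->
         ctrl_eq (eta * alpha) beta gamma tstar L vf (xi * nj) Ns n' q' ts' te' C' ->
         theta (eta * alpha) L vf C' > 2 ->
         C' < C))) /\
  (* (iii) perimeter control under hypercongestion lowers the cost *)
  (forall (n : R -> R) (Cb : R) (n' q' : R -> R) (ts te Cbp : R),
     bathtub_eq alpha beta gamma tstar L vf nj Ns n Cb ->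
     theta alpha L vf Cb > 2 ->
     ctrl_eq alpha beta gamma tstar L vf nj Ns n' q' ts te Cbp ->
     Cb > Cbp).
Proof.
  pose proof (ctrl_eq_cost L vf nj alpha beta gamma tstar Ns hL hvf hnj halpha hbeta hgamma)
    as cost.
  split; [exact cost | split; [split; [| split] |]].
  - intros nj1 nj2 hnj12. apply Cbp_formula_lt; lra.
  - intros a1 a2 ha12. apply Cbp_formula_lt; lra.
  - intros eta xi [heta heta1] hxi hne.
    assert (heta0 : 0 < eta) by (pose proof (Rdiv_lt_0_compat beta alpha hbeta halpha); lra).
    pose proof (Cbp_formula_av_lt alpha beta gamma L vf nj Ns eta xi
                  hL hvf hnj halpha hbeta hgamma hNs (conj heta0 heta1) hxi hne) as av_lt.
    split; [exact av_lt |].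
    intros n q n' q' ts te C ts' te' C' HE htheta HE' htheta'.
    rewrite (cost _ _ _ _ _ HE htheta).
    rewrite (ctrl_eq_cost L vf (xi * nj) (eta * alpha) beta gamma tstar Ns
               hL hvf ltac:(nra) ltac:(nra) hbeta hgamma _ _ _ _ _ HE' htheta').
    exact av_lt.
  - intros n Cb n' q' ts te Cbp HB htheta HC.
    exact (ctrl_eq_cost_lt_bathtub_eq_cost L vf nj alpha beta gamma tstar Ns
             hL hvf hnj halpha hbeta hgamma n n' q' Cb ts te Cbp HB htheta HC).
Qed.
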